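(* Let $B$ be a left-free $H$-$G$-biset with a finite basis $S$, and let $g\in G$. Choose a basis $S$ and write $\Phi(g)=\langle h_s\rangle_{s\in S}\pi$ for the associated wreath map; let $S_1,\dots,S_\ell$ be the orbits of $\pi$ on $S$, and for each $j$, writing $S_j=\{s_1,\dots,s_{d_j}\}$ with $s_i^\pi=s_{i+1}$ (indices modulo $d_j$), let $k_j=h_{s_1}h_{s_2}\cdots h_{s_{d_j}}$. Then the multiset $\{(d_j,k_j^H)\mid j=1,\dots,\ell\}$ of pairs (degree, $H$-conjugacy class), called the lift of $g^G$, is independent of the choice of $g$ in its conjugacy class $g^G$, of the basis $S$, and of the cyclic ordering chosen for each orbit $S_j$.
   Context: An $H$-$G$-biset $B$ is left-free if as a left $H$-set it is isomorphic to $H\times S$; a basis is a subset $S$ containing exactly one element from each left $H$-orbit. The wreath map $\Phi\colon G\to H\wr\mathrm{Sym}(S)$ is defined by $\Phi(g)=\langle h_s\rangle_{s\in S}\pi$ where $sg=h_s\,s^\pi$ for all $s\in S$ (with $h_s\in H$, $s^\pi\in S$). $k^H$ denotes the conjugacy class of $k$ in $H$. *)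

From Stdlib Require Import Permutation.
From Stdlib Require List.
From mathcomp Require Import all_boot.
Set Implicit Arguments. Unset Strict Implicit. Unset Printing Implicit Defensive.

Record group_str (T : Type) := GroupStr {
  gmul : T -> T -> T;
  ginv : T -> T;
  gone : T;
  gmulA : forall x y z, gmul x (gmul y z) = gmul (gmul x y) z;
  gmul1 : forall x, gmul gone x = x;
  gmulV : forall x, gmul (ginv x) x = gone
}.

Record biset (H G B : Type) (gH : group_str H) (gG : group_str G) := Biset {
  actl : H -> B -> B;
  actr : B -> G -> B;
  actl1 : forall b, actl (gone gH) b = b;
  actlM : forall h1 h2 b, actl (gmul gH h1 h2) b = actl h1 (actl h2 b);
  actr1 : forall b, actr b (gone gG) = b;
  actrM : forall b g1 g2, actr b (gmul gG g1 g2) = actr (actr b g1) g2;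
  actlr : forall h b g, actr (actl h b) g = actl h (actr b g)
}.

(* e : 'I_n -> B is a (finite) basis of the left-free biset:
   every b is uniquely h . e i (so B = H x S as left H-sets, S = image of e
   meets every left H-orbit exactly once). *)
Definition is_basis H G B gH gG (X : @biset H G B gH gG) n (e : 'I_n -> B) :=
  forall b, exists h i, b = actl X h (e i) /\
    forall h' i', b = actl X h' (e i') -> h' = h /\ i' = i.

(* (h, pi) is the wreath map data of g w.r.t. basis e:  s_i g = h_i s_{pi i}. *)
Definition is_wreath H G B gH gG (X : @biset H G B gH gG) n (e : 'I_n -> B)
    (g : G) (h : 'I_n -> H) (pi : 'I_n -> 'I_n) :=
  forall i, actr X (e i) g = actl X (h i) (e (pi i)).

(* r lists exactly one starting point s_1 for each orbit of pi. *)
Definition orbit_reps n (pi : 'I_n -> 'I_n) (r : seq 'I_n) :=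
  forall i, count (fun x => fconnect pi x i) r = 1.

Definition cycle_prod H (gH : group_str H) n (h : 'I_n -> H) (pi : 'I_n -> 'I_n)
    (x : 'I_n) : H :=
  foldr (fun m acc => gmul gH (h (iter m pi x)) acc) (gone gH)
        (iota 0 (fingraph.order pi x)).

Definition lift_list H (gH : group_str H) n (h : 'I_n -> H) (pi : 'I_n -> 'I_n)
    (r : seq 'I_n) : seq (nat * H) :=
  [seq (fingraph.order pi x, cycle_prod gH h pi x) | x <- r].

Definition conjugate H (gH : group_str H) (k k' : H) :=
  exists y, k' = gmul gH (ginv gH y) (gmul gH k y).

(* equality of the multisets {(d_j, k_j^H)} *)
Definition same_lift H (gH : group_str H) (L L' : seq (nat * H)) :=
  exists L'', Permutation L' L'' /\
    List.Forall2 (fun p q => p.1 = q.1 /\ conjugate gH p.2 q.2) L L''.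

(** A change of basis and a conjugation [g' = x^-1 g x] are handled at once
    by a second basis [e'] with [e i . x = psi i . e' (phi i)]. Then [phi]
    conjugates the permutation [pi] of [g] into the permutation [pi'] of [g'],
    and [psi i] conjugates the cycle product at [i] into the one at [phi i],
    because the cycle product [k] at [i] is characterised by
    [e i . g^d = k . e i], [d] being the length of the cycle. Taking [e' = e]
    and [x = g] shows that rotating the starting point of a cycle conjugates
    its cycle product; this matches [phi] of each representative of [pi] with
    the chosen representative of [pi'] of the same cycle. *)

From Stdlib Require Import Permutation.
From mathcomp Require Import all_boot.
Set Implicit Arguments. Unset Strict Implicit. Unset Printing Implicit Defensive.

Section GroupFacts.

Variables (T : Type) (gT : group_str T).

Lemma gmulgV x : gmul gT x (ginv gT x) = gone gT.
Proof.
set y := ginv gT x.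
rewrite -[gmul gT x y](gmul1 gT) -(gmulV gT y) -gmulA (gmulA gT y x y).
by rewrite [gmul gT y x]gmulV gmul1.
Qed.

Lemma gmulg1 x : gmul gT x (gone gT) = x.
Proof. by rewrite -(gmulV gT x) gmulA gmulgV gmul1. Qed.

Lemma ginvM x y : ginv gT (gmul gT x y) = gmul gT (ginv gT y) (ginv gT x).
Proof.
have xyK : gmul gT (gmul gT x y) (gmul gT (ginv gT y) (ginv gT x)) = gone gT.
  by rewrite -gmulA (gmulA gT y) gmulgV gmul1 gmulgV.
by rewrite -[ginv gT _]gmulg1 -xyK gmulA gmulV gmul1.
Qed.

Lemma ginv1 : ginv gT (gone gT) = gone gT.
Proof. by rewrite -[ginv gT _]gmulg1 gmulV. Qed.

Lemma gconj_self x : gmul gT (ginv gT x) (gmul gT x x) = x.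
Proof. by rewrite gmulA gmulV gmul1. Qed.

Lemma conjugate_refl k : conjugate gT k k.
Proof. by exists (gone gT); rewrite ginv1 gmul1 gmulg1. Qed.

Lemma conjugate_trans k1 k2 k3 :
  conjugate gT k1 k2 -> conjugate gT k2 k3 -> conjugate gT k1 k3.
Proof. by move=> [y ->] [z ->]; exists (gmul gT y z); rewrite ginvM !gmulA. Qed.

End GroupFacts.

Lemma order_le_iter (T : finType) (f : T -> T) x m :
  0 < m -> iter m f x = x -> order f x <= m.
Proof.
move=> m_gt0 fmx; rewrite leqNgt; apply/negP => /findex_iter.
by rewrite fmx findex0 => m0; rewrite -m0 in m_gt0.
Qed.

Lemma order_iter (T : finType) (f : T -> T) : injective f ->
  forall m x, order f (iter m f x) = order f x.
Proof.
move=> f_inj; elim=> //= m IHm x.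
by rewrite order_id_cycle ?IHm //; apply: cycle_orbit.
Qed.

Lemma iter_hom (T T' : finType) (f : T -> T) (f' : T' -> T') (phi : T -> T') :
  (forall x, phi (f x) = f' (phi x)) ->
  forall m x, iter m f' (phi x) = phi (iter m f x).
Proof. by move=> phiC; elim=> //= m IHm x; rewrite IHm phiC. Qed.

Lemma order_hom (T T' : finType) (f : T -> T) (f' : T' -> T') (phi : T -> T') :
  injective f -> injective f' -> injective phi ->
  (forall x, phi (f x) = f' (phi x)) ->
  forall x, order f' (phi x) = order f x.
Proof.
move=> f_inj f'_inj phi_inj phiC x; apply/eqP; rewrite eqn_leq.
apply/andP; split; apply: order_le_iter => //.
  by rewrite (iter_hom phiC) iter_order.
by apply: phi_inj; rewrite -(iter_hom phiC) iter_order.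
Qed.

Section Biset.

Variables (H G B : Type) (gH : group_str H) (gG : group_str G).
Variable X : biset B gH gG.

Lemma actlK a : cancel (actl X a) (actl X (ginv gH a)).
Proof. by move=> b; rewrite -actlM gmulV actl1. Qed.

Lemma actrK y : cancel (actr X ^~ y) (actr X ^~ (ginv gG y)).
Proof. by move=> b; rewrite -actrM gmulgV actr1. Qed.

Lemma actrKV y : cancel (actr X ^~ (ginv gG y)) (actr X ^~ y).
Proof. by move=> b; rewrite -actrM gmulV actr1. Qed.

Definition actr_iter (g : G) m b := iter m (actr X ^~ g) b.

Lemma actr_iter_actl g m a b :
  actr_iter g m (actl X a b) = actl X a (actr_iter g m b).
Proof. by elim: m => //= m IHm; rewrite IHm actlr. Qed.

Lemma actr_iter_conj g y m b :
  actr_iter (gmul gG (ginv gG y) (gmul gG g y)) m (actr X b y)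
  = actr X (actr_iter g m b) y.
Proof.
by elim: m => //= m IHm; rewrite IHm -!actrM gmulA gmulgV gmul1.
Qed.

Lemma basis_free n (e : 'I_n -> B) a a' i i' :
  is_basis X e -> actl X a (e i) = actl X a' (e i') -> a = a' /\ i = i'.
Proof.
move=> basis_e eq_ai; have [? [? [_ uniq_b]]] := basis_e (actl X a (e i)).
by have [-> ->] := uniq_b a i erefl; have [-> ->] := uniq_b a' i' eq_ai.
Qed.

Section BasisTransport.

Variables (n n' : nat) (e : 'I_n -> B) (e' : 'I_n' -> B) (y : G).
Variables (c : 'I_n -> H) (f : 'I_n -> 'I_n').
Hypothesis basis_e : is_basis X e.
Hypothesis transport : forall i, actr X (e i) y = actl X (c i) (e' (f i)).

Lemma basis_transport_inj : injective f.
Proof.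
move=> i j fij.
have e_y i0 : e i0 = actl X (c i0) (actr X (e' (f i0)) (ginv gG y)).
  by rewrite -actlr -transport actrK.
have : actl X (gone gH) (e i) = actl X (gmul gH (c i) (ginv gH (c j))) (e j).
  by rewrite actl1 actlM !e_y actlK fij.
by case/(basis_free basis_e).
Qed.

Lemma basis_transport_surj : is_basis X e' -> forall j, exists i, f i = j.
Proof.
move=> basis_e' j; have [a [i [eq_ai _]]] := basis_e (actr X (e' j) (ginv gG y)).
exists i; have : actl X (c i) (e' (f i)) = actl X (ginv gH a) (e' j).
  by rewrite -transport -(actlK a (e i)) -eq_ai actlr actrKV.
by case/(basis_free basis_e').
Qed.

End BasisTransport.

Lemma basis_transport_exists n n' (e : 'I_n -> B) (e' : 'I_n' -> B) y :
  is_basis X e' ->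
  exists psi phi, forall i, actr X (e i) y = actl X (psi i) (e' (phi i)).
Proof.
move=> basis_e'.
have /fin_all_exists [c transport] i :
    exists c : H * 'I_n', actr X (e i) y = actl X c.1 (e' c.2).
  by have [a [j [eq_aj _]]] := basis_e' (actr X (e i) y); exists (a, j).
by exists (fun i => (c i).1), (fun i => (c i).2).
Qed.

Lemma wreath_perm_inj n (e : 'I_n -> B) g h pi :
  is_basis X e -> is_wreath X e g h pi -> injective pi.
Proof. exact: basis_transport_inj. Qed.

Fixpoint walk_prod n (h : 'I_n -> H) (pi : 'I_n -> 'I_n) m x : H :=
  if m is m'.+1 then gmul gH (h x) (walk_prod h pi m' (pi x)) else gone gH.

Lemma cycle_prodE n (h : 'I_n -> H) pi x :
  cycle_prod gH h pi x = walk_prod h pi (order pi x) x.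
Proof.
suff foldrE m k : foldr (fun j acc => gmul gH (h (iter j pi x)) acc) (gone gH)
                        (iota k m) = walk_prod h pi m (iter k pi x) by apply: foldrE.
by elim: m k => //= m IHm k; rewrite IHm.
Qed.

Lemma actr_iter_wreath n (e : 'I_n -> B) g h pi :
  is_wreath X e g h pi -> forall m x,
  actr_iter g m (e x) = actl X (walk_prod h pi m x) (e (iter m pi x)).
Proof.
move=> wreath_e; elim=> [|m IHm] x; first by rewrite actl1.
rewrite /actr_iter iterSr -/(actr_iter g m _) wreath_e actr_iter_actl IHm.
by rewrite -actlM -iterSr.
Qed.

Lemma actr_iter_cycle_prod n (e : 'I_n -> B) g h pi :
  is_wreath X e g h pi -> injective pi -> forall x,
  actr_iter g (order pi x) (e x) = actl X (cycle_prod gH h pi x) (e x).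
Proof.
move=> wreath_e pi_inj x.
by rewrite (actr_iter_wreath wreath_e) iter_order // cycle_prodE.
Qed.

Section BasisChange.

Variables (n n' : nat) (e : 'I_n -> B) (e' : 'I_n' -> B) (g y : G).
Variables (h : 'I_n -> H) (pi : 'I_n -> 'I_n) (h' : 'I_n' -> H) (pi' : 'I_n' -> 'I_n').
Variables (psi : 'I_n -> H) (phi : 'I_n -> 'I_n').
Hypotheses (basis_e : is_basis X e) (basis_e' : is_basis X e').
Hypothesis wreath_e : is_wreath X e g h pi.
Hypothesis wreath_e' : is_wreath X e' (gmul gG (ginv gG y) (gmul gG g y)) h' pi'.
Hypothesis change : forall i, actr X (e i) y = actl X (psi i) (e' (phi i)).

Lemma basis_change_perm i : phi (pi i) = pi' (phi i).
Proof.
have := actr_iter_conj g y 1 (e i); rewrite /actr_iter /=.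
rewrite change actlr wreath_e' wreath_e actlr change -!actlM.
by case/(basis_free basis_e').
Qed.

Let pi_inj := wreath_perm_inj basis_e wreath_e.
Let pi'_inj := wreath_perm_inj basis_e' wreath_e'.

Lemma basis_change_order i : order pi' (phi i) = order pi i.
Proof.
apply: order_hom => //; first exact: basis_transport_inj basis_e change.
exact: basis_change_perm.
Qed.

Lemma basis_change_cycle_prod i :
  conjugate gH (cycle_prod gH h pi i) (cycle_prod gH h' pi' (phi i)).
Proof.
have cp_e := actr_iter_cycle_prod wreath_e pi_inj i.
have cp_e' := actr_iter_cycle_prod wreath_e' pi'_inj (phi i).
rewrite basis_change_order in cp_e'.
have := actr_iter_conj g y (order pi i) (e i).
rewrite change actr_iter_actl cp_e' cp_e actlr change -!actlM.
case/(basis_free basis_e') => cpC _; exists (psi i).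
by rewrite -cpC gmulA gmulV gmul1.
Qed.

End BasisChange.

Lemma cycle_prod_rot n (e : 'I_n -> B) g h pi :
  is_basis X e -> is_wreath X e g h pi ->
  forall x, conjugate gH (cycle_prod gH h pi x) (cycle_prod gH h pi (pi x)).
Proof.
move=> basis_e wreath_e.
apply: (basis_change_cycle_prod basis_e basis_e wreath_e _ wreath_e).
by rewrite gconj_self.
Qed.

Lemma cycle_prod_iter n (e : 'I_n -> B) g h pi :
  is_basis X e -> is_wreath X e g h pi -> forall m x,
  conjugate gH (cycle_prod gH h pi x) (cycle_prod gH h pi (iter m pi x)).
Proof.
move=> basis_e wreath_e; elim=> [|m IHm] x; first exact: conjugate_refl.
exact: conjugate_trans (IHm x) (cycle_prod_rot basis_e wreath_e _).
Qed.

End Biset.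

Section OrbitReps.

Variables (n : nat) (pi : 'I_n -> 'I_n) (r : seq 'I_n).
Hypothesis reps : orbit_reps pi r.

Lemma orbit_reps_uniq : uniq r.
Proof.
apply: count_mem_uniq => x.
have le1 : count_mem x r <= 1.
  by rewrite -(reps x); apply: sub_count => y /eqP ->; apply: connect0.
case: (boolP (x \in r)) => [x_r|/count_memPn //].
by move: le1; rewrite -has_pred1 has_count in x_r; case: count x_r => [|[]].
Qed.

Lemma orbit_reps_eq a b : a \in r -> b \in r -> fconnect pi a b -> a = b.
Proof.
move=> a_r b_r ab; apply/eqP/negPn/negP => neq_ab.
have : size [:: a; b] <= count (fconnect pi ^~ b) r.
  rewrite -size_filter; apply: uniq_leq_size; first by rewrite /= inE neq_ab.
  move=> z; rewrite !inE mem_filter => /orP[] /eqP ->.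
    by rewrite ab a_r.
  by rewrite b_r connect0.
by rewrite reps.
Qed.

Definition orbit_rep y := nth y r (find (fconnect pi ^~ y) r).

Lemma orbit_repP y : orbit_rep y \in r /\ fconnect pi (orbit_rep y) y.
Proof.
have has_y : has (fconnect pi ^~ y) r by rewrite has_count reps.
by split; [rewrite /orbit_rep mem_nth // -has_find | exact: (nth_find y has_y)].
Qed.

Lemma orbit_rep_iter : injective pi ->
  forall y, orbit_rep y = iter (findex pi y (orbit_rep y)) pi y.
Proof.
move=> pi_inj y; have [_ rep_y] := orbit_repP y.
by rewrite iter_findex // fconnect_sym.
Qed.

End OrbitReps.

Section OrbitRepsTransfer.

Variables (n n' : nat) (pi : 'I_n -> 'I_n) (pi' : 'I_n' -> 'I_n').
Variable phi : 'I_n -> 'I_n'.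
Hypotheses (pi'_inj : injective pi') (phi_inj : injective phi).
Hypothesis phi_surj : forall y, exists x, phi x = y.
Hypothesis phiC : forall x, phi (pi x) = pi' (phi x).
Variables (r : seq 'I_n) (r' : seq 'I_n').
Hypotheses (reps : orbit_reps pi r) (reps' : orbit_reps pi' r').

Lemma fconnect_hom a b : fconnect pi' (phi a) (phi b) = fconnect pi a b.
Proof.
apply/idP/idP => [/iter_findex|/iter_findex <-]; last first.
  by rewrite -(iter_hom phiC) fconnect_iter.
by rewrite (iter_hom phiC) => /phi_inj <-; apply: fconnect_iter.
Qed.

Lemma perm_orbit_reps : perm_eq r' (map (orbit_rep pi' r' \o phi) r).
Proof.
apply: uniq_perm; first exact: orbit_reps_uniq reps'.
  rewrite map_inj_in_uniq ?(orbit_reps_uniq reps) // => a b a_r b_r /= eq_rep.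
  apply: (orbit_reps_eq reps) => //; rewrite -fconnect_hom.
  have [_ rep_a] := orbit_repP reps' (phi a).
  have [_ rep_b] := orbit_repP reps' (phi b).
  rewrite fconnect_sym // in rep_a; rewrite -eq_rep in rep_b.
  exact: connect_trans rep_a rep_b.
move=> y; have [x <-] := phi_surj y.
apply/idP/mapP => [x_r'|[a _ ->]]; last by have [] := orbit_repP reps' (phi a).
have /hasP [a a_r ax] : has (fconnect pi ^~ x) r.
  by rewrite has_count reps.
exists a => //=; have [rep_r' rep_a] := orbit_repP reps' (phi a).
apply: (orbit_reps_eq reps') => //; rewrite fconnect_sym //.
by apply: (connect_trans rep_a); rewrite fconnect_hom.
Qed.

End OrbitRepsTransfer.

Lemma perm_eq_Permutation (T : eqType) (s1 s2 : seq T) :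
  perm_eq s1 s2 -> Permutation s1 s2.
Proof.
elim: s1 s2 => [|a s1 IHs1] s2 eq_s12.
  by move: eq_s12; rewrite perm_sym => /perm_nilP ->.
have a_s2 : a \in s2 by rewrite -(perm_mem eq_s12) mem_head.
case/splitPr: a_s2 eq_s12 => s21 s22 eq_s12.
apply: Permutation_cons_app; apply: IHs1.
by rewrite -(perm_cons a) (perm_trans eq_s12) // -cat1s perm_catCA.
Qed.

Lemma same_lift_map H (gH : group_str H) (T T' : eqType)
    (F : T -> nat * H) (F' : T' -> nat * H) (rho : T -> T') s s' :
  perm_eq s' (map rho s) ->
  (forall a, (F a).1 = (F' (rho a)).1 /\ conjugate gH (F a).2 (F' (rho a)).2) ->
  same_lift gH (map F s) (map F' s').
Proof.
move=> eq_s' F_rho; exists (map F' (map rho s)); split.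
  by apply: Permutation_map; apply: perm_eq_Permutation.
by rewrite -map_comp; elim: s {eq_s'} => //= a s IHs; constructor.
Qed.

Theorem mainTheorem11 (H G B : Type) (gH : group_str H) (gG : group_str G)
  (X : biset B gH gG)
  (n : nat) (e : 'I_n -> B) (n' : nat) (e' : 'I_n' -> B)
  (g g' x : G)
  (h : 'I_n -> H) (pi : 'I_n -> 'I_n) (r : seq 'I_n)
  (h' : 'I_n' -> H) (pi' : 'I_n' -> 'I_n') (r' : seq 'I_n') :
  is_basis X e -> is_basis X e' ->
  g' = gmul gG (ginv gG x) (gmul gG g x) ->
  is_wreath X e g h pi -> is_wreath X e' g' h' pi' ->
  orbit_reps pi r -> orbit_reps pi' r' ->
  same_lift gH (lift_list gH h pi r) (lift_list gH h' pi' r').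
Proof.
move=> basis_e basis_e' -> wreath_e wreath_e' reps reps'.
have [psi [phi change]] := basis_transport_exists e x basis_e'.
have pi'_inj := wreath_perm_inj basis_e' wreath_e'.
have phi_inj := basis_transport_inj basis_e change.
have phi_surj := basis_transport_surj basis_e change basis_e'.
have phiC := basis_change_perm basis_e' wreath_e wreath_e' change.
have cp_phi := basis_change_cycle_prod basis_e basis_e' wreath_e wreath_e' change.
apply: (same_lift_map (rho := orbit_rep pi' r' \o phi)).
  exact: perm_orbit_reps.
move=> a /=; rewrite (orbit_rep_iter reps' pi'_inj) order_iter //.
split; first by rewrite (basis_change_order basis_e basis_e' wreath_e wreath_e' change).
apply: conjugate_trans (cp_phi a) _.
exact: cycle_prod_iter basis_e' wreath_e' _ _.
Qed.
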